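(* For any finite-rank $S,T\in\mathfrak S_1(\mathbb T)$, $$d(S,T)=\rho_1(f_S,f_T).$$
   Context: Rigged sets: each point has a multiplicity in $\{0,1,\dots,\infty\}$; an enumeration lists each point according to its multiplicity. $\mathfrak S_1(\mathbb T)$ is the set of countable rigged subsets of the unit circle $\mathbb T$ (identified with $[0,2\pi)$, arc-length metric) in which $1$ has infinite multiplicity, with no other accumulation point and with $d(S,\mathbf 1)<\infty$, where $d(S,T)=\inf\sum_j\mathrm{dist}(s_j,t_j)$ over enumerations $(s_j),(t_j)$ of $S,T$ and $\mathbf 1$ is $1$ with infinite multiplicity. $S$ has finite rank if it has finitely many points other than $1$ counting multiplicity. For such $S$, $f_S$ is the class, modulo addition of integer constants, of the function $(0,2\pi)\ni\theta\mapsto\#\{s\in S\setminus\{1\}:\theta<\arg s\}$ (counting multiplicity, $\arg s\in(0,2\pi)$). For two such classes $f,g$, $\rho_1(f,g)=\inf\int_0^{2\pi}|\tilde f(\theta)-\tilde g(\theta)|\,d\theta$ over all representatives $\tilde f$ of $f$ and $\tilde g$ of $g$. *)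

(* R : realType. The circle T is identified with
   angles in [0, 2pi), the point 1 corresponding to the angle 0. *)
From mathcomp Require Import all_boot all_order all_algebra.
From mathcomp Require Import all_classical all_reals all_analysis.
Set Implicit Arguments. Unset Strict Implicit. Unset Printing Implicit Defensive.
Import Order.TTheory GRing.Theory Num.Theory.
Local Open Scope classical_set_scope.
Local Open Scope ring_scope.

Section Defs.
Variable R : realType.

Definition circ_dist (a b : R) : R := Num.min `|a - b| (2 * pi - `|a - b|).

(* A finite-rank element of S_1(T) is encoded by the finite multiset of its
   points other than 1 (given by their arguments in (0, 2pi)), as a list;
   the point 1 (angle 0) implicitly carries infinite multiplicity. *)
Definition finrank_rigged (S : seq R) : Prop :=
  forall a, a \in S -> 0 < a < 2 * pi.

Definition enumeration (S : seq R) (s : nat -> R) : Prop :=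
  (forall j, 0 <= s j < 2 * pi) /\
  infinite_set [set j | s j = 0] /\
  (forall x, x != 0 -> ([set j | s j = x] #= `I_(count_mem x S))%card).

Definition rigged_dist (S T : seq R) : \bar R :=
  ereal_inf [set e | exists (s t : nat -> R), [/\ enumeration S s,
      enumeration T t & e = (\sum_(0 <= j <oo) (circ_dist (s j) (t j))%:E)%E]].

(* a representative of f_S : theta |-> #{s in S\{1} : theta < arg s} *)
Definition fS (S : seq R) (theta : R) : R := (count (fun a => theta < a) S)%:R.

(* rho_1(f_S, f_T): inf over representatives (shifts by integer constants) *)
Definition rho1 (S T : seq R) : \bar R :=
  ereal_inf [set e | exists (m n : int),
     e = (\int[lebesgue_measure]_(x in `]0%R, (2 * pi)%R[)
                    (`|(fS S x + m%:~R) - (fS T x + n%:~R)|)%:E)%E].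

End Defs.

(* A pair of angles (x, y) with an integer shift d contributes
   |1_{t < x} - 1_{t < y} + d| to the integrand, and for the right d in
   {-1, 0, 1} its integral over (0, 2pi) is the arc distance of x and y.
   Hence, by the triangle inequality, every pairing of two enumerations costs
   at least the integral of |f_S - f_T + k| for k the sum of the shifts.
   Conversely, for every k a greedy pairing costs at most that integral: while
   k > 0, pair the largest point y of T with 1, which splits [y, 2pi) off the
   integrand and lowers k by one; k < 0 is symmetric; for k = 0 pair the largest
   points of S and T, which splits off the interval between them. *)

From mathcomp Require Import all_boot all_order all_algebra.
From mathcomp Require Import all_classical all_reals all_analysis.
From mathcomp Require Import ring lra measurable_realfun.
From mathcomp Require finmap.
Set Implicit Arguments. Unset Strict Implicit. Unset Printing Implicit Defensive.
Import Order.TTheory GRing.Theory Num.Theory.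
Local Open Scope classical_set_scope.
Local Open Scope ring_scope.

Module NatSetCard.
Import finmap.

Lemma card_eq_bounded_pred (P : pred nat) N : (forall j, P j -> (j < N)%N) ->
  ([set j | P j] #= `I_(count P (iota 0 N)))%card.
Proof.
move=> PltN.
have -> : [set j | P j] = [set` seq_fset tt [seq j <- iota 0 N | P j]].
  apply/funext => j; apply/propext.
  change (P j <-> j \in seq_fset tt [seq j <- iota 0 N | P j]).
  rewrite seq_fsetE mem_filter mem_iota add0n.
  by case Pj: (P j) => //=; rewrite PltN.
apply/card_eq_fsetP.
by rewrite size_seq_fset undup_id ?size_filter // filter_uniq // iota_uniq.
Qed.

End NatSetCard.
Import NatSetCard.

Lemma finite_set_nat_bounded (A : set nat) :
  finite_set A -> exists N, forall j, A j -> (j < N)%N.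
Proof.
move=> /finite_seqP[s ->]; exists (\max_(j <- s) j).+1 => j sj; rewrite ltnS.
exact: (@leq_bigmax_seq _ _ xpredT (fun j => j) j).
Qed.

Lemma seq_max_exists d (T : orderType d) (s : seq T) : s != [::] ->
  exists2 y, y \in s & forall c, c \in s -> (c <= y)%O.
Proof.
elim: s => [|c s IH] // _.
have [->|/IH[y ys ymax]] := eqVneq s [::].
  by exists c; rewrite ?mem_head // => e; rewrite inE => /eqP ->.
have [cy|yc] := leP c y.
  exists y; first by rewrite inE ys orbT.
  by move=> e; rewrite inE => /orP[/eqP ->|/ymax].
exists c; first exact: mem_head.
by move=> e; rewrite inE => /orP[/eqP ->|/ymax ey]; last exact: le_trans ey (ltW yc).
Qed.

Lemma eseries_eventually0 (R : realType) (u : nat -> R) N :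
  (forall j, (N <= j)%N -> u j = 0) ->
  (\sum_(0 <= j <oo) (u j)%:E)%E = (\sum_(0 <= j < N) u j)%:E.
Proof.
move=> u0; apply: lim_near_cst => //; near=> n.
have Nn : (N <= n)%N by near: n; exists N.
have tail0 : (\sum_(N <= j < n) (u j)%:E = 0)%E.
  by rewrite big_nat_cond big1 // => j /andP[/andP[Nj _] _]; rewrite u0.
by rewrite (big_cat_nat (leq0n N) Nn) /= tail0 adde0 sumEFin.
Unshelve. all: by end_near.
Qed.

Lemma card_eq_I_inj T (A : set T) m n :
  (A #= `I_m)%card -> (A #= `I_n)%card -> m = n.
Proof.
by move=> Am An; apply/card_eq_II; apply: card_eq_trans An; rewrite card_eq_sym.
Qed.

Lemma card_eq_level_mkseq (T : eqType) (f : nat -> T) N x :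
  (forall j, f j = x -> (j < N)%N) ->
  ([set j | f j = x] #= `I_(count_mem x (mkseq f N)))%card.
Proof.
move=> fN; have -> : [set j | f j = x] = [set j | f j == x].
  by apply/seteqP; split => j /= /eqP.
by rewrite /mkseq count_map; apply: card_eq_bounded_pred => j /eqP /fN.
Qed.

Section RiggedDistance.
Variable R : realType.
Local Notation D := (`]0%R, (2 * pi)%R[%classic : set R).
Local Notation leb := (@lebesgue_measure R).
Implicit Types (a b S T : seq R) (k : int) (c t u v x y : R).

Lemma pi2_gt0 : 0 < 2 * pi :> R.
Proof. by rewrite mulr_gt0 // pi_gt0. Qed.

Lemma circ_distC x y : circ_dist x y = circ_dist y x.
Proof. by rewrite /circ_dist distrC. Qed.

Lemma circ_dist_le_norm x y : circ_dist x y <= `|x - y|.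
Proof. by rewrite /circ_dist ge_min lexx. Qed.

Lemma circ_dist_le_wrap x y : circ_dist x y <= 2 * pi - `|x - y|.
Proof. by rewrite /circ_dist ge_min lexx orbT. Qed.

Lemma circ_dist00 : circ_dist 0 0 = 0 :> R.
Proof. by rewrite /circ_dist subrr normr0 subr0 min_l // ltW // pi2_gt0. Qed.

Definition ind_co u v t : R := ((u <= t) && (t < v))%:R.

Lemma ind_co_ge0 u v t : 0 <= ind_co u v t.
Proof. exact: ler0n. Qed.

Lemma ind_coE u v : ind_co u v = \1_(`[u, v[ : set R).
Proof. by apply/funext => t; rewrite indicE /ind_co mem_setE in_itv. Qed.

Lemma measurable_ind_co u v (A : set R) : measurable_fun A (ind_co u v).
Proof. by rewrite ind_coE; apply: measurable_indic; exact: measurable_itv. Qed.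

Lemma ge0_integralD_EFin (h1 h2 : R -> R) :
  measurable_fun D h1 -> measurable_fun D h2 ->
  (forall t, D t -> 0 <= h1 t) -> (forall t, D t -> 0 <= h2 t) ->
  (\int[leb]_(t in D) (h1 t + h2 t)%:E =
   \int[leb]_(t in D) (h1 t)%:E + \int[leb]_(t in D) (h2 t)%:E)%E.
Proof.
move=> mh1 mh2 h10 h20; under eq_integral do rewrite EFinD.
apply: ge0_integralD; first exact: measurable_itv.
- by move=> t Dt; rewrite lee_fin h10.
- exact/measurable_EFinP.
- by move=> t Dt; rewrite lee_fin h20.
- exact/measurable_EFinP.
Qed.

Lemma integral_ind_co u v : 0 <= u -> u <= v -> v <= 2 * pi ->
  (\int[leb]_(t in D) (ind_co u v t)%:E = (v - u)%:E)%E.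
Proof.
move=> u0 uv v2pi.
have itv_len (l r : bool) : leb [set` Interval (BSide l u) (BSide r v)] = (v - u)%:E.
  rewrite lebesgue_measure_itv /= lte_fin.
  by case: ltgtP uv => //= -> _; rewrite subrr.
have mID : measurable (`[u, v[%classic `&` D) by apply: measurableI; exact: measurable_itv.
rewrite ind_coE integral_indic; [|exact: measurable_itv|exact: measurable_itv].
apply/eqP; rewrite eq_le; apply/andP; split.
  rewrite -(itv_len true true).
  by apply: (@le_measure _ _ _ leb); rewrite ?inE //; exact: measurable_itv.
rewrite -(itv_len false true).
apply: (@le_measure _ _ _ leb (`]u, v[%classic)); rewrite ?inE //.
move=> t /=; rewrite !in_itv /= => /andP[ut tv]; split.
  by rewrite (ltW ut) tv.
by apply/andP; split; lra.
Qed.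

Lemma fS_cons c a t : fS (c :: a) t = (t < c)%R%:R + fS a t.
Proof. by rewrite /fS /= natrD. Qed.

Lemma fS_cat a b t : fS (a ++ b) t = fS a t + fS b t.
Proof. by rewrite /fS count_cat natrD. Qed.

Lemma fS_nil t : fS [::] t = 0.
Proof. by []. Qed.

Lemma fS_ge0 a t : 0 <= fS a t.
Proof. exact: ler0n. Qed.

Lemma fS_eq0 a t : (forall c, c \in a -> c <= t) -> fS a t = 0.
Proof.
move=> a_le_t; rewrite /fS (@eq_in_count _ _ pred0) ?count_pred0 //.
by move=> c /a_le_t ct /=; rewrite ltNge ct.
Qed.

Lemma fS_perm a b t : perm_eq a b -> fS a t = fS b t.
Proof. by rewrite /fS => /permP ->. Qed.

Lemma measurable_fS a (A : set R) : measurable_fun A (fS a).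
Proof.
elim: a => [|c a IH]; first by rewrite /fS /=; exact: measurable_cst.
have -> : fS (c :: a) = (fun t => (t < c)%R%:R + fS a t).
  by apply/funext => t; rewrite fS_cons.
apply: measurable_funD => //.
have -> : (fun t => (t < c)%R%:R : R) = \1_(`]-oo, c[ : set R).
  by apply/funext => t; rewrite indicE mem_setE in_itv.
by apply: measurable_indic; exact: measurable_itv.
Qed.

Definition gap a b k t := `|fS a t - fS b t + k%:~R|.

Definition gap_int a b k := (\int[leb]_(t in D) (gap a b k t)%:E)%E.

Lemma gap_ge0 a b k t : 0 <= gap a b k t.
Proof. exact: normr_ge0. Qed.

Lemma gapC a b k t : gap b a k t = gap a b (- k) t.
Proof. by rewrite /gap -normrN intrN; congr `|_|; ring. Qed.

Lemma gap_perm a a' b b' k t : perm_eq a a' -> perm_eq b b' ->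
  gap a b k t = gap a' b' k t.
Proof. by move=> aa' bb'; rewrite /gap (fS_perm t aa') (fS_perm t bb'). Qed.

Lemma measurable_gap a b k : measurable_fun D (gap a b k).
Proof.
apply: measurableT_comp; first exact: normr_measurable.
apply: measurable_funD; last exact: measurable_cst.
by apply: measurable_funB; exact: measurable_fS.
Qed.

Lemma gap_int_ge0 a b k : (0 <= gap_int a b k)%E.
Proof. by apply: integral_ge0 => t _; rewrite lee_fin gap_ge0. Qed.

Lemma gap_intC a b k : gap_int b a k = gap_int a b (- k).
Proof. by apply: eq_integral => t _; rewrite gapC. Qed.

Lemma gap_int_nil : gap_int [::] [::] 0 = 0%E.
Proof.
rewrite /gap_int; under eq_integral do rewrite /gap /fS /= subrr addr0 normr0.
exact: integral0.
Qed.

Lemma gap_int_catD_le a1 a2 b1 b2 k1 k2 :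
  (gap_int (a1 ++ a2) (b1 ++ b2) (k1 + k2) <=
   gap_int a1 b1 k1 + gap_int a2 b2 k2)%E.
Proof.
rewrite /gap_int -ge0_integralD_EFin; try exact: measurable_gap;
  try by move=> t _; exact: gap_ge0.
apply: ge0_le_integral; first exact: measurable_itv.
- by move=> t _; rewrite lee_fin gap_ge0.
- by apply/measurable_EFinP; exact: measurable_gap.
- by apply/measurable_EFinP; apply: measurable_funD; exact: measurable_gap.
move=> t _; rewrite lee_fin /gap !fS_cat intrD.
have -> : fS a1 t + fS a2 t - (fS b1 t + fS b2 t) + (k1%:~R + k2%:~R) =
          (fS a1 t - fS b1 t + k1%:~R) + (fS a2 t - fS b2 t + k2%:~R) by ring.
exact: ler_normD.
Qed.

Lemma gap_pairE x y k t :
  gap [:: x] [:: y] k t = `|(t < x)%R%:R - (t < y)%R%:R + k%:~R|.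
Proof. by rewrite /gap !fS_cons /fS /= !addr0. Qed.

Lemma gap_pair_short x y t : x <= y -> gap [:: x] [:: y] 0 t = ind_co x y t.
Proof.
move=> xy; rewrite gap_pairE addr0 distrC /ind_co.
by case: (ltP t x) => ?; case: (ltP t y) => ?; rewrite /= ger0_norm; lra.
Qed.

Lemma gap_pair_long x y t : 0 < t < 2 * pi -> x <= y ->
  gap [:: x] [:: y] 1 t = ind_co 0 x t + ind_co y (2 * pi) t.
Proof.
move=> /andP[t0 t2] xy; rewrite gap_pairE /ind_co (ltW t0) t2 /=.
by case: (ltP t x) => ?; case: (ltP t y) => ?; rewrite /= ger0_norm; lra.
Qed.

Lemma gap_int_pair x y : 0 <= x < 2 * pi -> 0 <= y < 2 * pi ->
  exists d : int, gap_int [:: x] [:: y] d = (circ_dist x y)%:E.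
Proof.
wlog xy : x y / x <= y.
  move=> W hx hy; have [xy|/ltW yx] := leP x y; first exact: W.
  have [d hd] := W y x yx hy hx; exists (- d).
  by rewrite -gap_intC hd circ_distC.
move=> /andP[x0 x2] /andP[y0 y2].
have dist_xy : `|x - y| = y - x by rewrite distrC ger0_norm // subr_ge0.
have [short|long] := leP (y - x) (2 * pi - (y - x)).
  exists 0; rewrite /circ_dist dist_xy min_l // -integral_ind_co //; last exact: ltW.
  by apply: eq_integral => t _; rewrite gap_pair_short.
exists 1; rewrite /circ_dist dist_xy min_r ?(ltW long) //.
have -> : 2 * pi - (y - x) = (x - 0) + (2 * pi - y) by ring.
rewrite EFinD -!integral_ind_co ?(ltW y2) ?(ltW x2) // -ge0_integralD_EFin;
  try exact: measurable_ind_co; try by move=> ? _; exact: ind_co_ge0.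
apply: eq_integral => t; rewrite inE /= in_itv /= => Dt.
by rewrite gap_pair_long.
Qed.

Definition pairing_cost a b :=
  \sum_(0 <= j < size a) circ_dist (nth 0 a j) (nth 0 b j).

Lemma pairing_cost_nil : pairing_cost [::] [::] = 0.
Proof. by rewrite /pairing_cost big_geq. Qed.

Lemma pairing_cost_cons x a y b :
  pairing_cost (x :: a) (y :: b) = circ_dist x y + pairing_cost a b.
Proof. by rewrite /pairing_cost /= big_nat_recl. Qed.

Lemma pairing_costC a b : size a = size b -> pairing_cost b a = pairing_cost a b.
Proof.
by move=> sz; rewrite /pairing_cost sz; apply: eq_bigr => j _; rewrite circ_distC.
Qed.

Lemma gap_int_le_pairing_cost a b : size a = size b ->
  (forall c, c \in a -> 0 <= c < 2 * pi) -> (forall c, c \in b -> 0 <= c < 2 * pi) ->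
  exists k, (gap_int a b k <= (pairing_cost a b)%:E)%E.
Proof.
elim: a b => [|x a IH] [|y b] //=.
  by move=> _ _ _; exists 0; rewrite gap_int_nil pairing_cost_nil.
move=> [sz] xa yb.
have [k hk] := IH b sz (fun c ca => xa c (mem_behead (s := x :: a) ca))
                       (fun c cb => yb c (mem_behead (s := y :: b) cb)).
have [d hd] := gap_int_pair (xa x (mem_head _ _)) (yb y (mem_head _ _)).
exists (d + k); rewrite pairing_cost_cons EFinD -hd.
by apply: le_trans (gap_int_catD_le [:: x] a [:: y] b d k) _; apply: leeD.
Qed.

Lemma gap_cons_nil x a k t : 0 < t -> 0 <= k ->
  gap (x :: a) [::] k t = gap a [::] k t + ind_co 0 x t.
Proof.
move=> t0 k0; rewrite /gap fS_cons fS_nil /ind_co (ltW t0) /=.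
have a0 := fS_ge0 a t; have k0' : 0 <= k%:~R :> R by rewrite ler0z.
by case: (ltP t x) => _ /=; rewrite !ger0_norm; lra.
Qed.

Lemma gap_cons_r_max a y b k t : t < 2 * pi -> 0 < k ->
  (forall c, c \in b -> c <= y) ->
  gap a (y :: b) k t = gap a b (k - 1) t + ind_co y (2 * pi) t.
Proof.
move=> t2 k0 b_le_y; rewrite /gap fS_cons /ind_co t2 intrB andbT.
have a0 := fS_ge0 a t; have k1 : 1 <= k%:~R :> R by rewrite ler1z.
case: (ltP t y) => ty /=.
  by rewrite addr0; congr `|_|; ring.
rewrite (@fS_eq0 b t); last by move=> c /b_le_y cy; exact: le_trans cy ty.
by rewrite !ger0_norm; lra.
Qed.

Lemma gap_cons_max x a y b t : y <= x -> (forall c, c \in b -> c <= y) ->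
  gap (x :: a) (y :: b) 0 t = gap a b 0 t + ind_co y x t.
Proof.
move=> yx b_le_y; rewrite /gap !fS_cons /ind_co.
have a0 := fS_ge0 a t; have b0 := fS_ge0 b t.
case: (ltP t y) => ty /=.
  by rewrite (lt_le_trans ty yx) /= mulr0n !addr0; congr `|_|; ring.
rewrite (@fS_eq0 b t); last by move=> c /b_le_y cy; exact: le_trans cy ty.
by case: (ltP t x) => _ /=; rewrite !ger0_norm; lra.
Qed.

(* [a'] is [a] padded with zeros, i.e. with copies of the point 1. *)
Definition pads a' a := perm_eq [seq c <- a' | c != 0] a.

Definition pairing_le a b k := exists a' b', [/\ size a' = size b',
  pads a' a, pads b' b & ((pairing_cost a' b')%:E <= gap_int a b k)%E].

Lemma pairing_le_nil k : pairing_le [::] [::] k.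
Proof. by exists [::], [::]; split; rewrite ?pairing_cost_nil ?gap_int_ge0. Qed.

Lemma pairing_leC a b k : pairing_le b a (- k) -> pairing_le a b k.
Proof.
move=> [b' [a' [sz pb pa cost_le]]]; exists a', b'; split => //.
by rewrite pairing_costC // -[k]opprK -gap_intC.
Qed.

(* Pair [x] with [y], where the value [0] stands for the point 1 (recorded
   in no list); the pair costs at most the length of the interval that is
   split off the gap. *)
Lemma pairing_le_peel a b k a1 b1 k1 x y u v :
  perm_eq a ([seq c <- [:: x] | c != 0] ++ a1) ->
  perm_eq b ([seq c <- [:: y] | c != 0] ++ b1) ->
  (forall t, D t -> gap a b k t = gap a1 b1 k1 t + ind_co u v t) ->
  0 <= u -> u <= v -> v <= 2 * pi -> circ_dist x y <= v - u ->
  pairing_le a1 b1 k1 -> pairing_le a b k.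
Proof.
move=> pa pb gapE u0 uv v2 dxy [a1' [b1' [sz pa1 pb1 cost_le]]].
exists (x :: a1'), (y :: b1'); split.
- by rewrite /= sz.
- by rewrite /pads -cat1s filter_cat perm_sym (perm_trans pa) // perm_cat2l perm_sym.
- by rewrite /pads -cat1s filter_cat perm_sym (perm_trans pb) // perm_cat2l perm_sym.
have -> : gap_int a b k = (gap_int a1 b1 k1 + (v - u)%:E)%E.
  rewrite -integral_ind_co // -ge0_integralD_EFin; try exact: measurable_gap;
    try exact: measurable_ind_co; try by move=> ? _; rewrite ?gap_ge0 ?ind_co_ge0.
  by apply: eq_integral => t /[!inE] Dt; rewrite gapE.
by rewrite pairing_cost_cons EFinD addeC; apply: leeD; rewrite ?lee_fin.
Qed.

Lemma finrank_rigged_sub a b : {subset a <= b} -> finrank_rigged b -> finrank_rigged a.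
Proof. by move=> ab hb c /ab /hb. Qed.

Lemma pairing_le_cons_nil x a k : 0 < x < 2 * pi -> 0 <= k ->
  pairing_le a [::] k -> pairing_le (x :: a) [::] k.
Proof.
move=> /andP[x0 x2] k0; apply: (@pairing_le_peel _ _ _ a [::] k x 0 0 x).
- by rewrite /= (gt_eqF x0).
- by rewrite /= eqxx.
- by move=> t; rewrite /= in_itv /= => /andP[t0 _]; rewrite gap_cons_nil.
- exact: lexx.
- exact: ltW.
- exact: ltW.
by apply: le_trans (circ_dist_le_norm _ _) _; rewrite !subr0 ger0_norm // ltW.
Qed.

Lemma pairing_le_shift a b y k : y \in b -> (forall c, c \in b -> c <= y) ->
  0 < y < 2 * pi -> 0 < k ->
  pairing_le a (rem y b) (k - 1) -> pairing_le a b k.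
Proof.
move=> yb b_le_y /andP[y0 y2] k0.
apply: (@pairing_le_peel _ _ _ a (rem y b) (k - 1) 0 y y (2 * pi)).
- by rewrite /= eqxx.
- by rewrite /= (gt_eqF y0) perm_to_rem.
- move=> t; rewrite /= in_itv /= => /andP[_ t2].
  rewrite (gap_perm _ _ (perm_refl a) (perm_to_rem yb)) gap_cons_r_max //.
  by move=> c /mem_rem; exact: b_le_y.
- exact: ltW.
- exact: ltW.
- exact: lexx.
by apply: le_trans (circ_dist_le_wrap _ _) _; rewrite sub0r normrN ger0_norm // ltW.
Qed.

Lemma pairing_le_max a b x y : x \in a -> y \in b ->
  (forall c, c \in a -> c <= x) -> (forall c, c \in b -> c <= y) ->
  0 < x < 2 * pi -> 0 < y < 2 * pi ->
  pairing_le (rem x a) (rem y b) 0 -> pairing_le a b 0.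
Proof.
wlog yx : a b x y / y <= x.
  move=> W xa yb a_le_x b_le_y hx hy p0; have [yx|/ltW xy] := leP y x.
    exact: (W a b x y).
  apply: pairing_leC; rewrite oppr0; apply: (W b a y x) => //.
  by apply: pairing_leC; rewrite oppr0.
move=> xa yb a_le_x b_le_y /andP[x0 x2] /andP[y0 y2].
apply: (@pairing_le_peel _ _ _ (rem x a) (rem y b) 0 x y y x).
- by rewrite /= (gt_eqF x0) perm_to_rem.
- by rewrite /= (gt_eqF y0) perm_to_rem.
- move=> t _; rewrite (gap_perm _ _ (perm_to_rem xa) (perm_to_rem yb)) gap_cons_max //.
  by move=> c /mem_rem; exact: b_le_y.
- exact: ltW.
- exact: yx.
- exact: ltW.
by apply: le_trans (circ_dist_le_norm _ _) _; rewrite ger0_norm // subr_ge0.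
Qed.

Lemma pairing_le_nil_r a k : finrank_rigged a -> 0 <= k -> pairing_le a [::] k.
Proof.
elim: a => [|x a IH] ha k0; first exact: pairing_le_nil.
apply: pairing_le_cons_nil => //; first exact: ha (mem_head _ _).
by apply: IH => // c ca; apply: ha; rewrite inE ca orbT.
Qed.

Lemma pairing_le_exists a b k :
  finrank_rigged a -> finrank_rigged b -> pairing_le a b k.
Proof.
move: {2}(size a + size b)%N (leqnn (size a + size b)) => n.
elim: n a b k => [|n IH] a b k.
  by case: a => [|??] //; case: b => [|??] // _ _ _; exact: pairing_le_nil.
wlog k0 : a b k / 0 <= k.
  move=> W sz ha hb; have [k0|/ltW k_le0] := leP 0 k; first exact: W.
  by apply: pairing_leC; apply: W; rewrite ?oppr_ge0 // addnC.
move=> sz ha hb.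
have [->|b_nil] := eqVneq b [::]; first exact: pairing_le_nil_r.
have [ym ymb b_le_ym] := seq_max_exists b_nil.
have hb' : finrank_rigged (rem ym b) by apply: finrank_rigged_sub hb => c /mem_rem.
have b_gt0 : (0 < size b)%N by rewrite lt0n size_eq0.
have size_ab : (size a + size (rem ym b) <= n)%N.
  by move: sz; rewrite size_rem // -(prednK b_gt0) addnS ltnS.
have [k_gt0|k_le0] := ltP 0 k.
  apply: (pairing_le_shift ymb b_le_ym (hb _ ymb) k_gt0).
  exact: IH.
have -> : k = 0 by apply/eqP; rewrite eq_le k_le0 k0.
have [->|a_nil] := eqVneq a [::].
  by apply: pairing_leC; rewrite oppr0; exact: pairing_le_nil_r.
have [xm xma a_le_xm] := seq_max_exists a_nil.
apply: (pairing_le_max xma ymb a_le_xm b_le_ym (ha _ xma) (hb _ ymb)).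
apply: IH => //; last by apply: finrank_rigged_sub ha => c /mem_rem.
by apply: leq_trans size_ab; rewrite leq_add2r size_rem // leq_pred.
Qed.

Lemma fS_pads a' a t : pads a' a -> 0 < t -> fS a' t = fS a t.
Proof.
move=> /permP pa' t0; rewrite /fS -pa' count_filter; congr (_%:R).
apply: eq_count => c /=; case: (ltP t c) => //= tc.
by rewrite gt_eqF // (lt_trans t0 tc).
Qed.

Lemma count_mem_pads a' a x : x != 0 -> pads a' a -> count_mem x a = count_mem x a'.
Proof.
move=> x0 /permP <-; rewrite count_filter; apply: eq_count => c /=.
by case: eqP => // ->; rewrite x0.
Qed.

Lemma enumeration_nth_pads a' a : finrank_rigged a -> pads a' a ->
  enumeration a (nth 0 a').
Proof.
move=> ha pa; split; [|split].
- move=> j; have [ja|aj] := ltnP j (size a'); last by rewrite nth_default // lexx pi2_gt0.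
  have [->|nz] := eqVneq (nth 0 a' j) 0; first by rewrite lexx pi2_gt0.
  have : nth 0 a' j \in a by rewrite -(perm_mem pa) mem_filter nz mem_nth.
  by move/ha => /andP[/ltW -> ->].
- move=> /finite_set_nat_bounded[N zeros_lt_N].
  have := zeros_lt_N (maxn N (size a')); rewrite /= nth_default ?leq_maxr //.
  by move=> /(_ erefl); rewrite ltnNge leq_maxl.
- move=> x x0; rewrite (count_mem_pads x0 pa) -[in X in count_mem _ X](mkseq_nth 0 a').
  apply: card_eq_level_mkseq => j; apply: contra_eqT; rewrite -leqNgt => aj.
  by rewrite nth_default // eq_sym.
Qed.

Lemma enumeration_mem a s j : enumeration a s -> s j != 0 -> s j \in a.
Proof.
move=> [_ [_ level_card]] sj0; rewrite -has_pred1 has_count lt0n.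
apply/negP => /eqP count0; have := level_card _ sj0.
rewrite count0 II0 card_eq0 => /eqP level0.
by have : [set i | s i = s j] j by []; rewrite level0.
Qed.

Lemma enumeration_eventually0 a s : finrank_rigged a -> enumeration a s ->
  exists N, forall j, (N <= j)%N -> s j = 0.
Proof.
move=> ha sa; have [_ [_ level_card]] := sa.
have : finite_set [set j | s j != 0].
  apply: (@sub_finite_set _ _ (\bigcup_(x in [set` a]) [set j | s j = x])).
    by move=> j /= sj0; exists (s j) => //=; exact: enumeration_mem.
  apply: bigcup_finite; first exact: finite_seq.
  move=> x /= xa; apply/finite_setP; exists (count_mem x a); apply: level_card.
  by have /andP[x0 _] := ha x xa; rewrite gt_eqF.
move=> /finite_set_nat_bounded[N supp_lt_N]; exists N => j Nj.
by have [//|/supp_lt_N] := eqVneq (s j) 0; rewrite ltnNge Nj.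
Qed.

Lemma pads_mkseq a s N : finrank_rigged a -> enumeration a s ->
  (forall j, (N <= j)%N -> s j = 0) -> pads (mkseq s N) a.
Proof.
move=> ha [_ [_ level_card]] sN; apply/allP => x _ /=; apply/eqP.
rewrite count_filter; have [->|x0] := eqVneq x 0.
  rewrite (@eq_count _ _ pred0); last by move=> c /=; case: eqP.
  by rewrite count_pred0; apply/esym/count_memPn/negP => /ha; rewrite ltxx.
rewrite (@eq_count _ _ (pred1 x)); last by move=> c /=; case: eqP => // ->.
apply: card_eq_I_inj (level_card x x0); apply: card_eq_level_mkseq => j sjx.
by rewrite ltnNge; apply: contraNN x0 => /sN <-; rewrite sjx.
Qed.

Lemma gap_int_pads a' a b' b k : pads a' a -> pads b' b ->
  gap_int a' b' k = gap_int a b k.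
Proof.
move=> pa pb; apply: eq_integral => t; rewrite inE /= in_itv /= => /andP[t0 _].
by rewrite /gap (fS_pads pa t0) (fS_pads pb t0).
Qed.

Lemma pairing_cost_mkseq (s t : nat -> R) N :
  pairing_cost (mkseq s N) (mkseq t N) = \sum_(0 <= j < N) circ_dist (s j) (t j).
Proof.
by rewrite /pairing_cost size_mkseq; apply: eq_big_nat => j /andP[_ jN]; rewrite !nth_mkseq.
Qed.

Lemma rho1_integrandE S T (m n : int) :
  (\int[leb]_(t in D) (`|(fS S t + m%:~R) - (fS T t + n%:~R)|)%:E)%E =
  gap_int S T (m - n).
Proof. by apply: eq_integral => t _; rewrite /gap intrB; congr (`|_|%:E); ring. Qed.

Lemma rigged_dist_le_rho1 S T : finrank_rigged S -> finrank_rigged T ->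
  (rigged_dist S T <= rho1 S T)%E.
Proof.
move=> hS hT; apply: le_ereal_inf_tmp => _ [m [n ->]]; rewrite rho1_integrandE.
have [a [b [sz pa pb cost_le]]] := pairing_le_exists (m - n) hS hT.
apply: le_trans cost_le; apply: ereal_inf_le; exists (pairing_cost a b)%:E => //.
exists (nth 0 a), (nth 0 b); split; try exact: enumeration_nth_pads.
rewrite (@eseries_eventually0 _ _ (size a)) // => j aj.
by rewrite !nth_default ?circ_dist00 // -sz.
Qed.

Lemma rho1_le_rigged_dist S T : finrank_rigged S -> finrank_rigged T ->
  (rho1 S T <= rigged_dist S T)%E.
Proof.
move=> hS hT; apply: le_ereal_inf_tmp => _ [s [t [sS tT ->]]].
have [N1 sN1] := enumeration_eventually0 hS sS.
have [N2 tN2] := enumeration_eventually0 hT tT.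
pose N := maxn N1 N2.
have sN j : (N <= j)%N -> s j = 0 by rewrite geq_max => /andP[/sN1].
have tN j : (N <= j)%N -> t j = 0 by rewrite geq_max => /andP[_ /tN2].
have in_circle A (f : nat -> R) :
    enumeration A f -> forall c, c \in mkseq f N -> 0 <= c < 2 * pi.
  by move=> [f_range _] c /mapP[j _ ->].
have sz : size (mkseq s N) = size (mkseq t N) by rewrite !size_mkseq.
have [k gap_le] := gap_int_le_pairing_cost sz (in_circle _ _ sS) (in_circle _ _ tT).
rewrite (@eseries_eventually0 _ _ N); last first.
  by move=> j /[dup] /sN -> /tN ->; rewrite circ_dist00.
rewrite -pairing_cost_mkseq; apply: le_trans gap_le.
rewrite (gap_int_pads _ (pads_mkseq hS sS sN) (pads_mkseq hT tT tN)).
apply: ereal_inf_le.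
by exists (gap_int S T k) => //; exists k, 0; rewrite rho1_integrandE subr0.
Qed.

End RiggedDistance.

Theorem mainTheorem13 (R : realType) (S T : seq R) :
  finrank_rigged S -> finrank_rigged T ->
  rigged_dist S T = rho1 S T.
Proof.
move=> hS hT; apply/eqP; rewrite eq_le.
by rewrite rigged_dist_le_rho1 ?rho1_le_rigged_dist.
Qed.
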